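(* Let $p$ be an odd prime, $v$ an integer with $1<v<p-1$ such that $g=v$ is a primitive root modulo $p$, and $t\ge1$. For $z\in\{0,\dots,v-1\}^t$ let $\lambda(z)=\#\{x\in\{0,\dots,p-2\}:\ (v^{x+\iota}\,\%\,p)\,\%\,v=z(\iota)\ \forall\,0\le\iota<t\}$. Then $\lambda(z)>0$ for all $z\in\{0,\dots,v-1\}^t$ if and only if $p\ge v^t+1$.
   Context: $x\,\%\,m$ denotes the least nonnegative remainder of the integer $x$ modulo $m$. *)

From mathcomp Require Import all_boot all_order all_algebra.
Set Implicit Arguments. Unset Strict Implicit. Unset Printing Implicit Defensive.
Import GRing.Theory.

Definition primitive_root_mod (p g : nat) : Prop :=
  primitive_root_of_unity p.-1 (g%:R : 'F_p).

Definition lambda (p v t : nat) (z : {ffun 'I_t -> 'I_v}) : nat :=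
  #|[set x : 'I_p.-1 | [forall i : 'I_t, (v ^ (x + i) %% p) %% v == z i]]|.
Arguments lambda p v t z : clear implicits.

From mathcomp Require Import all_boot all_order all_algebra all_solvable.
From mathcomp Require Import zify.
Set Implicit Arguments.
Unset Strict Implicit.
Unset Printing Implicit Defensive.
Import GRing.Theory.

(* If every pattern z occurs, the sets of exponents realising the v ^ t
   patterns are nonempty and pairwise disjoint in {0, ..., p-2}, so
   v ^ t <= p - 1.
   Conversely, as x runs over {0, ..., p-2}, a = v ^ x mod p runs over
   {1, ..., p-1}.  Writing r_i = a v^i mod p, we have
   r_(i+1) + p q_(i+1) = v r_i, where q_1 ... q_n are the base-v digits of
   floor(a v^n / p); hence r_(i+1) = - p q_(i+1) (mod v).  As p is invertible
   mod v, prescribing the digits r_i mod v for 1 <= i <= n amounts to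
   prescribing floor(a v^n / p) = M, i.e. a v^n in [p M, p M + p).  When
   v ^ (n+1) < p this window contains v consecutive values of a, one of which
   also has the prescribed residue a mod v. *)

Section Digits.
Variable v : nat.
Hypothesis v_gt0 : 0 < v.

(* The base-v number with digits c 1, ..., c k, most significant first;
   c 0 is not used. *)
Fixpoint from_digits (c : nat -> nat) (k : nat) : nat :=
  if k is j.+1 then from_digits c j * v + c j.+1 else 0.

Variable c : nat -> nat.
Hypothesis c_lt : forall i, c i < v.

Lemma from_digits_lt k : from_digits c k < v ^ k.
Proof.
elim: k => [|k IHk] //=; rewrite expnS.
have := c_lt k.+1; nia.
Qed.

Lemma from_digits_div k m : from_digits c (k + m) %/ v ^ m = from_digits c k.
Proof.
elim: m => [|m IHm]; first by rewrite addn0 divn1.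
by rewrite addnS /= expnS divnMA divnMDl // (divn_small (c_lt _)) addn0.
Qed.

End Digits.

Lemma exists_mod_in_window v lo d : d < v -> exists2 a, lo <= a < lo + v & a %% v = d.
Proof.
move=> d_lt; have v_gt0 : 0 < v by lia.
exists (lo + (d + v - lo %% v) %% v).
  by have := ltn_pmod (d + v - lo %% v) v_gt0; lia.
rewrite modnDmr.
have -> : lo + (d + v - lo %% v) = lo %/ v * v + (d + v).
  by have := divn_eq lo v; have := ltn_pmod lo v_gt0; lia.
by rewrite modnMDl -modnDmr modnn addn0 modn_small.
Qed.

Lemma exists_mod_mul_div_eq p v W M d : 0 < W -> v * W < p -> M < W -> d < v ->
  exists a, [/\ 0 < a < p, a %% v = d & a * W %/ p = M].
Proof.
move=> W_gt0 vW_lt M_lt d_lt.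
pose lo := (p * M) %/ W + 1.
have [a /andP[lo_le a_lt] a_mod] := exists_mod_in_window lo d_lt.
have loW_gt : p * M < lo * W by rewrite /lo addn1 ltn_ceil.
have loW_le : lo * W <= p * M + W by rewrite /lo mulnDl mul1n leq_add2r leq_divM.
have aW_gt : p * M < a * W by apply: leq_trans loW_gt (leq_mul lo_le (leqnn W)).
have aW_lt : a * W < p * M + p.
  have : a * W <= (lo + v.-1) * W by rewrite leq_mul2r; lia.
  nia.
exists a; split => //.
- apply/andP; split; first by lia.
  by rewrite -(ltn_pmul2r W_gt0); nia.
- apply/eqP; rewrite eqn_leq -ltnS ltn_divLR ?leq_divRL; lia.
Qed.

Lemma mul_exp_div_prefix p v c a n k : 0 < p -> 0 < v -> (forall i, c i < v) ->
  a * v ^ n %/ p = from_digits v c n -> k <= n -> a * v ^ k %/ p = from_digits v c k.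
Proof.
move=> p_gt0 v_gt0 c_lt a_div /subnKC n_eq.
rewrite -(from_digits_div v_gt0 c_lt k (n - k)) n_eq -a_div -divnMA.
by rewrite -[in a * v ^ n]n_eq expnD mulnA divnMr // expn_gt0 v_gt0.
Qed.

Lemma mul_exp_mod_digit p v c a k :
  a * v ^ k.+1 %/ p = from_digits v c k.+1 ->
  a * v ^ k.+1 %% p + p * c k.+1 = 0 %[mod v].
Proof.
move=> a_div.
have a_split : a * v ^ k.+1 = from_digits v c k * p * v + (a * v ^ k.+1 %% p + p * c k.+1).
  by rewrite {1}(divn_eq (a * v ^ k.+1) p) a_div /=; nia.
have : a * v ^ k.+1 = 0 %[mod v] by rewrite expnS mulnCA mod0n modnMr.
by rewrite {1}a_split modnMDl.
Qed.

Lemma exists_mul_exp_digits p v t (d : nat -> nat) :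
  coprime p v -> 1 < v -> 0 < t -> v ^ t < p -> (forall i, i < t -> d i < v) ->
  exists2 a, 0 < a < p & forall i, i < t -> a * v ^ i %% p %% v = d i.
Proof.
move=> co_pv v_gt1 t_gt0 vt_lt d_lt.
have v_gt0 : 0 < v by lia.
have [u _ v_dvd] := Bezoutl p v_gt0.
rewrite gcdnC (eqP co_pv) in v_dvd.
(* Since u p = -1 (mod v), p (c i) = - d i (mod v). *)
pose c i := u * d i %% v.
have c_lt i : c i < v by rewrite ltn_mod.
have d_cancel i : d i + p * c i = 0 %[mod v].
  rewrite /c -modnDmr modnMmr modnDmr mod0n.
  have -> : d i + p * (u * d i) = d i * (1 + u * p) by nia.
  exact/eqP/dvdn_mull.
case: t t_gt0 vt_lt d_lt => // n _ vn_lt d_lt.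
have vn_gt0 : 0 < v ^ n by rewrite expn_gt0 v_gt0.
rewrite expnS in vn_lt.
have [a [a_range a_mod a_div]] :=
  exists_mod_mul_div_eq vn_gt0 vn_lt (from_digits_lt v_gt0 c_lt n) (d_lt 0 (ltn0Sn n)).
exists a => // -[|k] k_lt.
  by case/andP: a_range => _ a_lt; rewrite expn0 muln1 (modn_small a_lt).
have p_gt0 : 0 < p by lia.
have a_div_k := mul_exp_div_prefix p_gt0 v_gt0 c_lt a_div (k_lt : k < n).
apply/eqP; rewrite -(modn_small (d_lt _ k_lt)) -(eqn_modDr (p * c k.+1)).
by rewrite (mul_exp_mod_digit a_div_k) d_cancel.
Qed.

Lemma primitive_root_mod_expP p g a : prime p -> primitive_root_mod p g -> 0 < a < p ->
  exists x : 'I_p.-1, g ^ x %% p = a.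
Proof.
move=> p_pr g_prim /andP[a_gt0 a_lt].
have co_ap : coprime a p by rewrite coprime_sym prime_coprime // gtnNdvd.
have a_unity : ((a%:R : 'F_p) ^+ p.-1 = 1)%R.
  by rewrite -natrX -Fp_nat_mod // -(totient_prime p_pr) Euler_exp_totient // Fp_nat_mod.
have [x a_eq] := prim_rootP g_prim a_unity.
exists x; have := congr1 (@nat_of_ord _) a_eq.
by rewrite -natrX !val_Fp_nat // (modn_small a_lt).
Qed.

Lemma card_le_disjoint_nonempty (I T : finType) (S : I -> {set T}) :
  (forall i, 0 < #|S i|) -> (forall i j x, x \in S i -> x \in S j -> i = j) ->
  #|I| <= #|T|.
Proof.
move=> S_gt0 S_disj.
have /fin_all_exists [f f_in] : forall i, exists x, x \in S i.
  by move=> i; apply/card_gt0P.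
apply: (leq_card f) => i j fij.
by apply: (S_disj i j (f i)); rewrite // fij.
Qed.

Theorem corollary7 (p v t : nat) :
  prime p -> odd p -> 1 < v -> v < p.-1 -> primitive_root_mod p v -> 1 <= t ->
  (forall z : {ffun 'I_t -> 'I_v}, 0 < lambda p v t z) <-> v ^ t + 1 <= p.
Proof.
move=> p_pr _ v_gt1 v_lt v_prim t_gt0.
have p_gt1 := prime_gt1 p_pr.
split=> [lambda_gt0 | vt_lt z].
  pose S (z : {ffun 'I_t -> 'I_v}) :=
    [set x : 'I_p.-1 | [forall i : 'I_t, v ^ (x + i) %% p %% v == z i]].
  have S_disj z1 z2 x : x \in S z1 -> x \in S z2 -> z1 = z2.
    rewrite !inE => /forallP z1x /forallP z2x; apply/ffunP => i; apply/val_inj => /=.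
    by rewrite -(eqP (z1x i)) (eqP (z2x i)).
  have := card_le_disjoint_nonempty (S := S) lambda_gt0 S_disj.
  by rewrite card_ffun !card_ord; lia.
have co_pv : coprime p v by rewrite prime_coprime // gtnNdvd //; lia.
pose d i := oapp (fun j : 'I_t => val (z j)) 0 (insub i).
have d_lt i : i < t -> d i < v.
  by rewrite /d; case: insubP => [j _ _ _ | _ _] /=; [exact: ltn_ord | lia].
have vt_lt_p : v ^ t < p by lia.
have [a a_range a_digits] := exists_mul_exp_digits co_pv v_gt1 t_gt0 vt_lt_p d_lt.
have [x a_eq] := primitive_root_mod_expP p_pr v_prim a_range.
apply/card_gt0P; exists x; rewrite inE; apply/forallP => i.
by rewrite expnD -modnMml a_eq a_digits // /d valK.
Qed.
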